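(* There are infinitely many positive integers $n$ for which there exists a function $\sigma\colon E(K_{4n})\to\{-1,1\}$ with $\sigma\left(E(K_{4n})\right)=2$ such that $\sigma(M)\neq 0$ for every perfect matching $M$ in $K_{4n}$.
   Context: $K_{4n}$ denotes the complete graph on $4n$ vertices and $E(K_{4n})$ its edge set. For a set $F$ of edges, $\sigma(F)=\sum_{e\in F}\sigma(e)$. *)

From mathcomp Require Import all_boot all_order all_algebra.
Set Implicit Arguments. Unset Strict Implicit. Unset Printing Implicit Defensive.
Import GRing.Theory Num.Theory.

(* Complete graph on vertex set V: the edges are the 2-element subsets of V. *)
Definition is_edge (V : finType) (e : {set V}) : bool := #|e| == 2.

Definition edges (V : finType) : {set {set V}} := [set e | is_edge e].

Definition perfect_matching (V : finType) (M : {set {set V}}) : bool :=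
  [&& M \subset edges V, trivIset M & cover M == [set: V]].

Definition sigma_sum (V : finType) (sigma : {set V} -> int) (F : {set {set V}}) : int :=
  (\sum_(e in F) sigma e)%R.

Definition signing (V : finType) (sigma : {set V} -> int) : Prop :=
  forall e, is_edge e -> sigma e = 1%R \/ sigma e = (-1)%R.

From mathcomp Require Import all_boot all_order all_algebra.
From mathcomp Require Import zify.
Set Implicit Arguments. Unset Strict Implicit. Unset Printing Implicit Defensive.
Import GRing.Theory Num.Theory.

(* Fix a set S of vertices of the complete graph on V and
   sign an edge -1 when it crosses the cut (S, ~: S) and +1 otherwise.  For
   any edge set F, sigma(F) = |F| - 2 c(F), where c(F) counts the crossing
   edges of F.
   - On all edges, c = |S| |~: S|, so sigma(E) = C(|V|,2) - 2 |S| |~: S|.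
   - A perfect matching M has |V|/2 edges and c(M) = |S| (mod 2), since every
     vertex of S lies in exactly one edge of M.  Hence if |S| is odd and
     8 divides |V|, then in sigma(M) = |M| - 2 c(M) the term |M| = |V|/2 is
     0 mod 4 while 2 c(M) is 2 mod 4, so sigma(M) never vanishes.
   For |V| = 4n with n = 4(N+1)(N+2) = (2N+3)^2 - 1 and the odd cut size
   |S| = 8N^2 + 22N + 13, the total is exactly 2, which proves the theorem
   for arbitrarily large n. *)

Section CutSigning.

Variable V : finType.
Implicit Types (S B e : {set V}) (F M : {set {set V}}).

Definition crosses S e : bool := #|e :&: S| == 1.

Definition cut_sign S e : int := if crosses S e then (-1)%R else 1%R.

Definition n_crossing S F : nat := \sum_(e in F) crosses S e.

Lemma cut_sign_signing S : signing (cut_sign S).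
Proof. by move=> e _; rewrite /cut_sign; case: crosses; [right | left]. Qed.

(* Each crossing edge contributes -1 instead of +1. *)
Lemma sigma_sum_cut S F :
  sigma_sum (cut_sign S) F = (#|F|%:Z - 2 * (n_crossing S F)%:Z)%R.
Proof.
have -> : sigma_sum (cut_sign S) F
    = (\sum_(e in F) (1 - 2 * (crosses S e : nat)%:Z))%R.
  by apply: eq_bigr => e _; rewrite /cut_sign; case: crosses.
rewrite sumrB sumr_const -mulr_sumr pmulrn intz.
by rewrite /n_crossing (big_morph Posz PoszD (erefl (Posz 0))).
Qed.

Lemma card_edges : #|edges V| = 'C(#|V|, 2).
Proof. by rewrite -card_draws; apply: eq_card => e; rewrite !inE. Qed.

(* The edges inside B are the 2-subsets of B. *)
Lemma n_edges_within B : \sum_(e in edges V) (e \subset B : nat) = 'C(#|B|, 2).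
Proof.
rewrite -cards_draws -sum1dep_card big_mkcond [RHS]big_mkcond /=.
apply: eq_bigr => e _; rewrite !inE /is_edge andbC.
by case: (#|e| == 2); case: (e \subset B).
Qed.

Lemma edge_trichotomy S e : #|e| = 2 ->
  crosses S e + (e \subset S) + (e \subset ~: S) = 1.
Proof.
move=> e2.
have inS : (e \subset S) = (#|e :&: S| == 2).
  rewrite -e2 (subset_leqif_cards (subsetIl e S)).2.
  by apply/idP/eqP => [/setIidPl | /setIidPl].
have outS : (e \subset ~: S) = (#|e :&: S| == 0).
  by rewrite -disjoints_subset -setI_eq0 cards_eq0.
have : #|e :&: S| <= 2 by rewrite -e2 subset_leq_card ?subsetIl.
by rewrite /crosses inS outS; case: #|e :&: S| => [|[|[|]]].
Qed.

(* Binomial identity counting the 2-subsets of a disjoint union. *)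
Lemma binD2 a b : 'C(a + b, 2) = 'C(a, 2) + 'C(b, 2) + a * b.
Proof.
elim: b => [|b IH]; first by rewrite bin0n muln0 !addn0.
by rewrite addnS !binS IH !bin1; lia.
Qed.

Lemma n_crossing_edges S : n_crossing S (edges V) = #|S| * #|~: S|.
Proof.
have split_edges : \sum_(e in edges V)
    (crosses S e + (e \subset S) + (e \subset ~: S)) = #|edges V|.
  rewrite -sum1_card; apply: eq_bigr => e.
  by rewrite inE /is_edge => /eqP; apply: edge_trichotomy.
move: split_edges; rewrite !big_split /= !n_edges_within card_edges.
by rewrite -(cardsC S) binD2 -addnA addnC => /addnI.
Qed.

Lemma sigma_sum_cut_edges S :
  sigma_sum (cut_sign S) (edges V)
  = ('C(#|V|, 2)%:Z - 2 * (#|S| * #|~: S|)%:Z)%R.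
Proof. by rewrite sigma_sum_cut card_edges n_crossing_edges. Qed.

Lemma perfect_matching_edge M e : perfect_matching M -> e \in M -> #|e| = 2.
Proof. by case/and3P => /subsetP sub _ _ /sub; rewrite inE => /eqP. Qed.

Lemma perfect_matching_card M : perfect_matching M -> #|M| * 2 = #|V|.
Proof.
move=> pm; case/and3P: (pm) => _ tri /eqP cov.
rewrite -cardsT -cov -(eqP tri) -sum_nat_const.
by apply: eq_bigr => e /(perfect_matching_edge pm).
Qed.

(* The matching edges partition S, so |S| = sum over M of |e :&: S|;
   each term is odd exactly when the edge crosses the cut. *)
Lemma perfect_matching_crossing_parity S M : perfect_matching M ->
  odd (n_crossing S M) = odd #|S|.
Proof.
move=> pm; case/and3P: (pm) => _ tri /eqP cov.
have cardS : #|S| = \sum_(e in M) #|e :&: S|.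
  have := @big_trivIset_cond _ _ _ addn M (mem S) (fun=> 1) tri; rewrite cov.
  rewrite (eq_bigl [in S]) ?sum1_card => [->|x]; last by rewrite in_setT.
  by apply: eq_bigr => e _; rewrite -sum1_card; apply: eq_bigl => x; rewrite !inE.
rewrite cardS; apply: (big_ind2 (fun a b => odd a = odd b)) => //.
  by move=> a b c d oac obd; rewrite !oddD oac obd.
move=> e /(perfect_matching_edge pm) e2.
have : #|e :&: S| <= 2 by rewrite -e2 subset_leq_card ?subsetIl.
by rewrite /crosses; case: #|e :&: S| => [|[|[|]]].
Qed.

Lemma cut_sign_matching_neq0 S M :
  odd #|S| -> 8 %| #|V| -> perfect_matching M -> sigma_sum (cut_sign S) M != 0%R.
Proof.
move=> oddS dvdV pm; rewrite sigma_sum_cut subr_eq0 -PoszM eqz_nat.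
have oddc : odd (n_crossing S M) by rewrite perfect_matching_crossing_parity.
rewrite -(perfect_matching_card pm) in dvdV; apply: contraTneq dvdV => ->.
by rewrite -[n_crossing S M]odd_double_half oddc; lia.
Qed.

End CutSigning.

(* Any cardinality up to |V| is realised by a subset of V, since the number
   of such subsets is a nonzero binomial coefficient. *)
Lemma exists_set_card (V : finType) k : k <= #|V| -> exists S : {set V}, #|S| = k.
Proof.
move=> le_kV; have : 0 < #|[set A : {set V} | #|A| == k]|.
  by rewrite card_draws bin_gt0.
by case/card_gt0P => S; rewrite inE => /eqP; exists S.
Qed.

(* With m = 4n, n = (2N+3)^2 - 1 and k = (m - 2(2N+3))/2, the signing of
   the cut of size k has total sum C(m,2) - 2k(m-k) = 2. *)
Lemma cut_total_arith N (n := 4 * (N.+1 * N.+2)) (k := (4 * N * N + 11 * N + 6).*2.+1) :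
  'C(4 * n, 2) = 2 + 2 * (k * (4 * n - k)).
Proof.
have := mul_bin_diag (4 * n) 1; rewrite bin1 /k /n; nia.
Qed.

Theorem proposition2 :
  forall N : nat, exists n : nat, (N < n)%N /\
    exists sigma : {set 'I_(4 * n)} -> int,
      signing sigma /\
      sigma_sum sigma (edges 'I_(4 * n)) = 2%R /\
      forall M : {set {set 'I_(4 * n)}},
        perfect_matching M -> sigma_sum sigma M <> 0%R.
Proof.
move=> N; pose n := 4 * (N.+1 * N.+2); pose k := (4 * N * N + 11 * N + 6).*2.+1.
exists n; split; first by rewrite /n; nia.
have [S cardS] : exists S : {set 'I_(4 * n)}, #|S| = k.
  by apply: exists_set_card; rewrite card_ord /k /n; nia.
have cardSC : #|~: S| = 4 * n - k by have := cardsC S; rewrite card_ord cardS; lia.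
exists (cut_sign S); split; [exact: cut_sign_signing | split].
- rewrite sigma_sum_cut_edges card_ord cardS cardSC cut_total_arith.
  by rewrite PoszD PoszM addrK.
- move=> M pm; apply/eqP; apply: cut_sign_matching_neq0 pm.
  + by rewrite cardS /= odd_double.
  + by rewrite card_ord /n mulnA dvdn_mulr.
Qed.
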